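(* Let $\rho,\sigma$ be positive semidefinite operators on $\mathcal{H}$ and $p\ge 0$ with $\rho\le p\sigma$. Then for every $x\in i\mathfrak{k}^*$, $I_\rho(x)\ge I_\sigma(x)-\ln p$. In particular, if $\mathrm{supp}\,\rho\subseteq\mathrm{supp}\,\sigma$ then $\mathrm{dom}\,I_\rho\subseteq\mathrm{dom}\,I_\sigma$.
   Context: $K$ is a compact connected Lie group with Lie algebra $\mathfrak{k}$, $G=K_{\mathbb{C}}$, $\mathfrak{g}=\mathbb{C}\otimes_{\mathbb{R}}\mathfrak{k}$, $i\mathfrak{k}^*$ the real space of complex-linear functionals on $\mathfrak{g}$ real on $i\mathfrak{k}$, with coadjoint $K$-action. $\pi:K\to U(\mathcal{H})$ is a unitary representation on a finite dimensional Hilbert space extended holomorphically to $G$. Fix a Borel subgroup $B\le G$; $T=B\cap K$, $\mathfrak{a}=i\,\mathrm{Lie}(T)$, $A=\exp\mathfrak{a}$, $N=[B,B]$; Iwasawa decomposition $g=kan$ with $\alpha(g)\in\mathfrak{a}$, $\exp\alpha(g)=a$. $i\mathfrak{t}^*_+$ is the closed dominant Weyl chamber; each $x=h\cdot x_0$ with $h\in K$, unique $x_0\in i\mathfrak{t}^*_+$; $\chi_x(g):=e^{2\langle x_0,\alpha(gh)\rangle}$ (independent of $h$). For positive semidefinite $\rho$, $I_\rho(x)=\sup_{g\in G}\big[-\ln\chi_x(g^{-1})-\ln\mathrm{Tr}\,\pi(g)^*\rho\pi(g)\big]\in(-\infty,\infty]$ (conventions $-\ln0=+\infty$), and $\mathrm{dom}\,I_\rho=\{x: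 I_\rho(x)<\infty\}$; $\mathrm{supp}$ denotes the support (range) subspace. *)

From HB Require Import structures.
From mathcomp Require Import all_boot all_order all_algebra.
From mathcomp Require Import all_classical all_reals all_analysis.
From mathcomp Require Import complex.
Set Implicit Arguments. Unset Strict Implicit. Unset Printing Implicit Defensive.
Import Order.TTheory GRing.Theory Num.Theory.
Local Open Scope ring_scope.
Local Open Scope classical_set_scope.

(* Operators on H = C^n, C = R[i] (complex numbers over a real type R). *)
Section Defs.
Variable R : realType.
Local Notation C := (R[i]).

Definition adj (n m : nat) (A : 'M[C]_(n, m)) : 'M[C]_(m, n) :=
  (map_mx (@conjc R) A)^T.

Definition psd (n : nat) (A : 'M[C]_n) : Prop :=
  adj A = A /\ forall v : 'cV[C]_n, 0 <= (adj v *m A *m v) 0 0.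

Definition loewner_le (n : nat) (A B : 'M[C]_n) : Prop := psd (B - A).

(* support (range) inclusion: column space of A contained in that of B *)
Definition supp_sub (n : nat) (A B : 'M[C]_n) : Prop := (A^T <= B^T)%MS.

(* -ln t with the convention -ln 0 = +oo (used for t >= 0) *)
Definition negln (t : R) : \bar R :=
  if 0 < t then (- ln t)%:E else +oo%E.

(* I_rho(x) = sup_g [ -ln chi_x(g^{-1}) - ln Tr pi(g)^* rho pi(g) ],
   where chix g stands for chi_x(g^{-1}) *)
Definition Ifun (G : Type) (n : nat) (pi : G -> 'M[C]_n) (chix : G -> R)
    (rho : 'M[C]_n) : \bar R :=
  ereal_sup [set (negln (chix g) + negln (complex.Re (\tr (adj (pi g) *m rho *m pi g))))%E
            | g in [set: G]].
Definition Cof (r : R) : C := Complex r 0.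
End Defs.

From HB Require Import structures.
From mathcomp Require Import all_boot all_order all_algebra.
From mathcomp Require Import all_classical all_reals all_analysis.
From mathcomp Require Import complex.
From mathcomp Require Import ring lra.
Import Order.TTheory GRing.Theory Num.Theory.
Local Open Scope ring_scope.
Set Implicit Arguments. Unset Strict Implicit. Unset Printing Implicit Defensive.

(* If rho <= p sigma in the Loewner order, congruence by pi(g) preserves the
   inequality, so Tr pi(g)^* rho pi(g) <= p Tr pi(g)^* sigma pi(g) for every g;
   as -ln is antitone, each term of the supremum defining I_rho dominates the
   corresponding term for I_sigma minus ln p.  If supp rho is contained in
   supp sigma, then rho = sigma Y sigma for some Y, and the Cauchy-Schwarz
   bound |(sigma v)_i|^2 <= sigma_ii <v, sigma v> gives
   <v, rho v> <= p <v, sigma v> for a suitable p > 0, which reduces the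
   second claim to the first. *)

Section HermitianForms.
Variable R : realType.
Local Notation C := R[i].
Local Notation ReC := (@complex.Re R).
Local Notation ImC := (@complex.Im R).

Lemma adjE m n (A : 'M[C]_(m, n)) i j : adj A i j = conjc (A j i).
Proof. by rewrite /adj !mxE. Qed.

Lemma adjK m n (A : 'M[C]_(m, n)) : adj (adj A) = A.
Proof. by apply/matrixP => i j; rewrite !adjE conjcK. Qed.

Lemma adjM m n p (A : 'M[C]_(m, n)) (B : 'M[C]_(n, p)) :
  adj (A *m B) = adj B *m adj A.
Proof. by rewrite /adj map_mxM trmx_mul. Qed.

Lemma adjD m n (A B : 'M[C]_(m, n)) : adj (A + B) = adj A + adj B.
Proof. by apply/matrixP => i j; rewrite !mxE rmorphD. Qed.

Lemma adjB m n (A B : 'M[C]_(m, n)) : adj (A - B) = adj A - adj B.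
Proof. by apply/matrixP => i j; rewrite !mxE rmorphB. Qed.

Lemma adjZ m n a (A : 'M[C]_(m, n)) : adj (a *: A) = conjc a *: adj A.
Proof. by apply/matrixP => i j; rewrite !mxE rmorphM. Qed.

Definition form n (A : 'M[C]_n) (u v : 'cV[C]_n) : C := (adj u *m A *m v) 0 0.

Lemma psd_form_ge0 n (A : 'M[C]_n) v : psd A -> 0 <= form A v v.
Proof. by case=> _ /(_ v). Qed.

Lemma formDl n (A : 'M[C]_n) u1 u2 v : form A (u1 + u2) v = form A u1 v + form A u2 v.
Proof. by rewrite /form adjD !mulmxDl mxE. Qed.

Lemma formDr n (A : 'M[C]_n) u v1 v2 : form A u (v1 + v2) = form A u v1 + form A u v2.
Proof. by rewrite /form !mulmxDr mxE. Qed.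

Lemma formZl n (A : 'M[C]_n) a u v : form A (a *: u) v = conjc a * form A u v.
Proof. by rewrite /form adjZ -!scalemxAl mxE. Qed.

Lemma formZr n (A : 'M[C]_n) a u v : form A u (a *: v) = a * form A u v.
Proof. by rewrite /form -!scalemxAr mxE. Qed.

Lemma form_scalemxB n (A B : 'M[C]_n) a u v :
  form (a *: A - B) u v = a * form A u v - form B u v.
Proof. by rewrite /form mulmxBr mulmxBl -scalemxAr -scalemxAl !mxE. Qed.

Lemma form_sym n (A : 'M[C]_n) u v : adj A = A -> form A v u = conjc (form A u v).
Proof. by move=> hermA; rewrite /form -adjE !adjM adjK hermA mulmxA. Qed.

Lemma form_mulmx n m (A : 'M[C]_n) (M : 'M[C]_(n, m)) u v :
  form A (M *m u) (M *m v) = form (adj M *m A *m M) u v.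
Proof. by rewrite /form adjM !mulmxA. Qed.

Lemma form_deltal n (A : 'M[C]_n) i v : form A (delta_mx i 0) v = (A *m v) i 0.
Proof.
have adj_delta : adj (delta_mx i 0 : 'cV[C]_n) = delta_mx 0 i.
  by apply/matrixP => a b; rewrite !mxE rmorph_nat andbC.
by rewrite /form adj_delta -mulmxA -rowE mxE.
Qed.

Lemma form_delta n (A : 'M[C]_n) i : form A (delta_mx i 0) (delta_mx i 0) = A i i.
Proof. by rewrite form_deltal -colE !mxE. Qed.

Definition sqnormc (z : C) : R := ReC z ^+ 2 + ImC z ^+ 2.

Lemma complex_ge0E (z : C) : (0 <= z) = (ImC z == 0) && (0 <= ReC z).
Proof. by rewrite lecE. Qed.

Lemma Cof_mulB_ge0E (p : R) (z w : C) :
  (0 <= Cof p * z - w) = (ImC w == p * ImC z) && (ReC w <= p * ReC z).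
Proof.
case: z w => [x1 x2] [y1 y2]; rewrite complex_ge0E /= !mul0r subr0 addr0.
by rewrite subr_eq0 subr_ge0 eq_sym.
Qed.

Lemma le_mul_of_quadratic_ge0 (X Y B : R) : 0 <= Y ->
  (forall t, 0 <= X - 2 * t * B + t ^+ 2 * B * Y) -> B <= X * Y.
Proof.
move=> Y_ge0 quad_ge0; have [Y0|Y_neq0] := eqVneq Y 0.
  have [->|B_neq0] := eqVneq B 0; first by rewrite Y0 mulr0.
  have := quad_ge0 ((X + 1) / (2 * B)); rewrite Y0.
  have -> : X - 2 * ((X + 1) / (2 * B)) * B + ((X + 1) / (2 * B)) ^+ 2 * B * 0 = -1.
    by field; rewrite B_neq0.
  by rewrite oppr_ge0 ler10.
have Y_gt0 : 0 < Y by rewrite lt_neqAle eq_sym Y_neq0.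
have := quad_ge0 Y^-1.
have -> : X - 2 * Y^-1 * B + Y^-1 ^+ 2 * B * Y = X - B / Y by field.
by rewrite subr_ge0 ler_pdivrMr.
Qed.

Lemma psd_cauchy_schwarz n (A : 'M[C]_n) u v : psd A ->
  sqnormc (form A u v) <= ReC (form A u u) * ReC (form A v v).
Proof.
move=> psdA; have [hermA _] := psdA.
apply: le_mul_of_quadratic_ge0 => [|t].
  by have := psd_form_ge0 v psdA; rewrite complex_ge0E => /andP[].
(* expand the form at u + mu v with mu = - t (form A u v)^* *)
have := psd_form_ge0 (u + (- Cof t * conjc (form A u v)) *: v) psdA.
rewrite formDl !formDr !formZl !formZr (form_sym u v hermA).
have := psd_form_ge0 u psdA; have := psd_form_ge0 v psdA.
rewrite !complex_ge0E /sqnormc.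
case: (form A u u) => x1 x2; case: (form A v v) => y1 y2.
case: (form A u v) => b1 b2 /= /andP[/eqP-> _] _ /andP[_].
nra.
Qed.

Lemma Re_conjc_mul_le (a b y : C) (N : R) : sqnormc a <= N -> sqnormc b <= N ->
  ReC (conjc a * y * b) <= (`|ReC y| + `|ImC y|) * N.
Proof.
case: a b y => [p q] [p' q'] [r s]; rewrite /sqnormc /= => a_le b_le.
have e1 := sqr_ge0 (p + p'); have e2 := sqr_ge0 (q + q').
have e3 := sqr_ge0 (p - p'); have e4 := sqr_ge0 (q - q').
have e5 := sqr_ge0 (q + p'); have e6 := sqr_ge0 (p + q').
have e7 := sqr_ge0 (q - p'); have e8 := sqr_ge0 (p - q').
have re_le : `|p * p' + q * q'| <= N by rewrite ler_norml; apply/andP; split; nra.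
have im_le : `|q * p' - p * q'| <= N by rewrite ler_norml; apply/andP; split; nra.
have -> : (p * r - - q * s) * p' - (p * s + - q * r) * q'
          = r * (p * p' + q * q') + s * (q * p' - p * q') by ring.
rewrite mulrDl; apply: lerD; apply: le_trans (ler_norm _) _;
  by rewrite normrM ler_wpM2l.
Qed.

Definition reim_norm1 n (Y : 'M[C]_n) : R :=
  \sum_j \sum_i (`|ReC (Y i j)| + `|ImC (Y i j)|).

Lemma form_le_reim_norm1 n (Y : 'M[C]_n) (a : 'cV[C]_n) (N : R) :
  (forall i, sqnormc (a i 0) <= N) -> ReC (form Y a a) <= reim_norm1 Y * N.
Proof.
move=> a_le; rewrite /form mxE raddf_sum mulr_suml; apply: ler_sum => j _.
rewrite mxE big_distrl raddf_sum mulr_suml; apply: ler_sum => i _.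
by rewrite adjE Re_conjc_mul_le.
Qed.

Lemma psd_diag_ge0 n (A : 'M[C]_n) i : psd A -> 0 <= A i i.
Proof. by rewrite -form_delta; apply: psd_form_ge0. Qed.

Lemma psd_mxtrace_ge0 n (A : 'M[C]_n) : psd A -> 0 <= \tr A.
Proof. by move=> psdA; apply: sumr_ge0 => i _; apply: psd_diag_ge0. Qed.

Lemma psd_congr n m (A : 'M[C]_n) (M : 'M[C]_(n, m)) : psd A -> psd (adj M *m A *m M).
Proof.
move=> psdA; have [hermA _] := psdA; split; first by rewrite !adjM adjK hermA mulmxA.
by move=> v; rewrite -/(form _ v v) -form_mulmx psd_form_ge0.
Qed.

Lemma loewner_le_mxtrace_congr n m (A B : 'M[C]_n) (M : 'M[C]_(n, m)) (p : R) :
  loewner_le A (Cof p *: B) ->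
  ReC (\tr (adj M *m A *m M)) <= p * ReC (\tr (adj M *m B *m M)).
Proof.
move=> /(psd_congr M) /psd_mxtrace_ge0.
rewrite mulmxBr mulmxBl -scalemxAr -scalemxAl linearB /= mxtraceZ.
by rewrite Cof_mulB_ge0E => /andP[].
Qed.

Lemma psd_mulmx_sqnormc n (A : 'M[C]_n) v i : psd A ->
  sqnormc ((A *m v) i 0) <= ReC (\tr A) * ReC (form A v v).
Proof.
move=> psdA; rewrite -form_deltal; apply: le_trans (psd_cauchy_schwarz _ _ psdA) _.
have diag_ge0 j : 0 <= ReC (A j j).
  by have := psd_diag_ge0 j psdA; rewrite complex_ge0E => /andP[].
have form_ge0 : 0 <= ReC (form A v v).
  by have := psd_form_ge0 v psdA; rewrite complex_ge0E => /andP[].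
rewrite form_delta ler_wpM2r // /mxtrace raddf_sum (bigD1 i) //=.
by rewrite lerDl sumr_ge0.
Qed.

Lemma supp_sub_factor n (A B : 'M[C]_n) : adj A = A -> adj B = B ->
  supp_sub A B -> exists Y, A = B *m Y *m B.
Proof.
move=> hermA hermB AsubB; pose P := (pinvmx B^T)^T.
have BPA : B *m P *m A = A.
  by apply: trmx_inj; rewrite !trmx_mul /P trmxK mulmxA; apply: mulmxKpV.
have APB : A *m adj P *m B = A.
  by have := congr1 (@adj R n n) BPA; rewrite !adjM hermA hermB mulmxA.
by exists (P *m A *m adj P); rewrite -{1}BPA -{1}APB !mulmxA.
Qed.

Lemma supp_sub_loewner n (rho sigma : 'M[C]_n) : psd rho -> psd sigma ->
  supp_sub rho sigma -> exists2 p : R, 0 < p & loewner_le rho (Cof p *: sigma).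
Proof.
move=> psd_rho psd_sigma rho_sub.
have [[herm_rho _] [herm_sigma _]] := (psd_rho, psd_sigma).
have [Y rhoE] := supp_sub_factor herm_rho herm_sigma rho_sub.
set K := reim_norm1 Y; set T := ReC (\tr sigma).
have K_ge0 : 0 <= K.
  by apply: sumr_ge0 => j _; apply: sumr_ge0 => i _; rewrite addr_ge0.
have T_ge0 : 0 <= T.
  by have := psd_mxtrace_ge0 psd_sigma; rewrite complex_ge0E => /andP[].
exists (K * T + 1); first by have := mulr_ge0 K_ge0 T_ge0; lra.
split=> [|v]; first by rewrite adjB adjZ herm_sigma herm_rho /Cof /conjc oppr0.
rewrite -/(form _ v v) form_scalemxB Cof_mulB_ge0E.
have := psd_form_ge0 v psd_rho; have := psd_form_ge0 v psd_sigma.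
rewrite !complex_ge0E => /andP[/eqP-> sigma_ge0] /andP[/eqP-> _].
rewrite mulr0 eqxx /=.
have rho_le : ReC (form rho v v) <= K * (T * ReC (form sigma v v)).
  rewrite {1}rhoE -{1}herm_sigma -form_mulmx; apply: form_le_reim_norm1 => i.
  exact: psd_mulmx_sqnormc.
by apply: le_trans rho_le _; nra.
Qed.

End HermitianForms.

Section RateFunction.
Variable R : realType.
Local Open Scope ereal_scope.

Lemma negln_neq_ninf (t : R) : negln t != -oo.
Proof. by rewrite /negln; case: ifP. Qed.

Lemma negln_le_mul (p a b : R) : (0 < p)%R -> (0 <= a)%R -> (a <= p * b)%R ->
  negln b + (- ln p)%:E <= negln a.
Proof.
move=> p_gt0 a_ge0 a_le; rewrite /negln.
have [a_gt0|] := ltP 0%R a; last by rewrite leey.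
have b_gt0 : (0 < b)%R by rewrite -(pmulr_rgt0 _ p_gt0); apply: lt_le_trans a_le.
rewrite b_gt0 -EFinD lee_fin.
have : (ln a <= ln (b * p))%R by rewrite ler_ln ?posrE ?mulr_gt0 // mulrC.
rewrite lnM ?posrE //; lra.
Qed.

Variables (n : nat) (G : Type) (pi : G -> 'M[R[i]]_n) (chix : G -> R).
Local Notation trace_at rho g := (complex.Re (\tr (adj (pi g) *m rho *m pi g))).

Lemma Ifun_pinfty (rho : 'M[R[i]]_n) (g : G) :
  trace_at rho g = 0%R -> Ifun pi chix rho = +oo.
Proof.
move=> tr0; apply/eqP; rewrite -leye_eq; apply: ereal_sup_ubound => /=.
by exists g => //; rewrite tr0 {2}/negln ltxx addey // negln_neq_ninf.
Qed.

Lemma Ifun_loewner (g0 : G) (rho sigma : 'M[R[i]]_n) (p : R) :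
  psd rho -> (0 <= p)%R -> loewner_le rho (Cof p *: sigma) ->
  Ifun pi chix sigma + negln p <= Ifun pi chix rho.
Proof.
move=> psd_rho p_ge0 rho_le.
have tr_ge0 g : (0 <= trace_at rho g)%R.
  by have := psd_mxtrace_ge0 (psd_congr (pi g) psd_rho); rewrite complex_ge0E => /andP[].
have tr_le g := loewner_le_mxtrace_congr (pi g) rho_le.
have [p0|p_neq0] := eqVneq p 0%R.
  (* all trace terms of rho vanish, so I_rho = +oo; this needs G inhabited *)
  suff -> : Ifun pi chix rho = +oo by rewrite leey.
  apply: (@Ifun_pinfty _ g0); apply/eqP; rewrite eq_le tr_ge0 andbT.
  by have := tr_le g0; rewrite p0 mul0r.
have p_gt0 : (0 < p)%R by rewrite lt_neqAle eq_sym p_neq0.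
rewrite /negln p_gt0 -leeBrDr //; apply: ub_ereal_sup => _ [g _ <-].
rewrite leeBrDr //; apply: le_trans (ereal_sup_ubound _); last by exists g.
by rewrite -addeA leeD // negln_le_mul.
Qed.

End RateFunction.

Theorem mainTheorem9 (R : realType) (n : nat) (G : Type) (g0 : G)
    (pi : G -> 'M[R[i]]_n) (X : Type) (chi : X -> G -> R)
    (rho sigma : 'M[R[i]]_n) :
  psd rho -> psd sigma ->
  (forall p : R, 0 <= p -> loewner_le rho (Cof p *: sigma) ->
     forall x : X,
       (Ifun pi (chi x) sigma + negln p <= Ifun pi (chi x) rho)%E) /\
  (supp_sub rho sigma ->
     forall x : X, (Ifun pi (chi x) rho < +oo)%E -> (Ifun pi (chi x) sigma < +oo)%E).
Proof.
move=> psd_rho psd_sigma; split=> [p p_ge0 rho_le x | rho_sub x].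
  exact: Ifun_loewner.
have [p p_gt0 rho_le] := supp_sub_loewner psd_rho psd_sigma rho_sub.
have := Ifun_loewner pi (chi x) g0 psd_rho (ltW p_gt0) rho_le.
rewrite /negln p_gt0 => /le_lt_trans I_lt /I_lt.
by rewrite !ltey; apply: contra_neq => ->; rewrite addye.
Qed.
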